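(* Let $X$ be a Banach space, $(A_m)_{m\in\mathbb{Z}}$ a sequence of invertible bounded linear operators on $X$ with $\sup_m\lVert A_m\rVert<\infty$ admitting an exponential dichotomy, and $c>0$ a constant as described in the context (with $B=l^\infty$). Let $f_n\colon X\to X$, $n\in\mathbb{Z}$, be differentiable maps with $\lVert d_xf_n\rVert\le c$ for all $x,n$, $\sup_n\sup_x\lVert f_n(x)\rVert<\infty$, and $\lVert d_xf_n-d_yf_n\rVert\le D\lVert x-y\rVert^r$ for some $D,r>0$ and all $x,y,n$. Put $F_n=A_n+f_n$ and assume there is $N\in\mathbb N$ with $F_{n+N}=F_n$ for all $n\in\mathbb{Z}$. Then there exists $L>0$ such that for every sufficiently small $\varepsilon>0$ and every sequence $\mathbf y=(y_n)_{n\in\mathbb{Z}}\subset X$ with $\sup_{n\in\mathbb{Z}}\lVert y_{n+1}-F_n(y_n)\rVert\le L\varepsilon$ and $y_{n+N}=y_n$ for all $n\in\mathbb{Z}$, there exists a sequence $\mathbf x=(x_n)_{n\in\mathbb{Z}}$ with $x_{n+1}=F_n(x_n)$ for all $n\in\mathbb{Z}$, $\sup_{n\in\mathbb{Z}}\lVert x_n-y_n\rVert\le\varepsilon$, and $x_{n+N}=x_n$ for all $n\in\mathbb{Z}$.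
   Context: $l^\infty$ denotes the space of bounded real sequences indexed by $\mathbb{Z}$ with the sup norm; $X_{l^\infty}$ is the space of bounded sequences $(x_n)_{n\in\mathbb{Z}}\subset X$ with norm $\sup_n\lVert x_n\rVert$. Exponential dichotomy: with $\mathcal A(m,n)=A_{m-1}\cdots A_n$ ($m>n$), $\mathrm{Id}$ ($m=n$), $A_m^{-1}\cdots A_{n-1}^{-1}$ ($m<n$), there exist projections $P_m$ with $P_{m+1}A_m=A_mP_m$ and $C,\lambda>0$ with $\lVert\mathcal A(m,n)P_n\rVert\le Ce^{-\lambda(m-n)}$ ($m\ge n$) and $\lVert\mathcal A(m,n)(\mathrm{Id}-P_n)\rVert\le Ce^{-\lambda(n-m)}$ ($m\le n$). The constant $c>0$ is such that there is $K>0$ for which every sequence $(B_m)$ of bounded operators with $\sup_m\lVert A_m-B_m\rVert\le c$ admits an exponential dichotomy and the operator $(\mathbb B\mathbf x)_n=B_{n-1}x_{n-1}$ on $X_{l^\infty}$ has $\mathrm{Id}-\mathbb B$ invertible with $\lVert(\mathrm{Id}-\mathbb B)^{-1}\rVert\le K$. *)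

From HB Require Import structures.
From mathcomp Require Import all_boot all_order all_algebra.
From mathcomp Require Import all_classical all_reals all_analysis.
Set Implicit Arguments. Unset Strict Implicit. Unset Printing Implicit Defensive.
Import Order.TTheory GRing.Theory Num.Theory.
Import numFieldNormedType.Exports.
Local Open Scope ring_scope.

Section Defs.
Variables (R : realType) (V : normedModType R).

(* ||T|| <= M, for a (linear) map T : V -> V, written out via the
   defining property of the operator norm. *)
Definition opnorm_le (T : V -> V) (M : R) : Prop :=
  forall x : V, `|T x| <= M * `|x|.

Definition bounded_op (T : V -> V) : Prop := exists M : R, opnorm_le T M.

Fixpoint prod_fwd (A : int -> V -> V) (n : int) (k : nat) : V -> V :=
  match k with
  | 0%N => id
  | k'.+1 => A (n + k'%:Z) \o prod_fwd A n k'
  end.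

Fixpoint prod_bwd (Ainv : int -> V -> V) (n : int) (k : nat) : V -> V :=
  match k with
  | 0%N => id
  | k'.+1 => Ainv (n - k'.+1%:Z) \o prod_bwd Ainv n k'
  end.

Definition cocycle (A Ainv : int -> V -> V) (m n : int) : V -> V :=
  if n <= m then prod_fwd A n `|m - n|%N else prod_bwd Ainv n `|m - n|%N.

Definition exp_dichotomy_with (A Ainv : int -> V -> V) : Prop :=
  exists (P : int -> {linear V -> V}) (C lam : R),
    0 < C /\ 0 < lam /\
        (forall m, bounded_op (P m)) /\
        (forall m x, P m (P m x) = P m x) /\
        (forall m x, P (m + 1) (A m x) = A m (P m x)) /\
        (forall m n : int, n <= m ->
           opnorm_le (cocycle A Ainv m n \o P n)
                     (C * expR (- lam * (m - n)%:~R))) /\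
        (forall m n : int, m <= n ->
           opnorm_le (cocycle A Ainv m n \o (fun x => x - P n x))
                     (C * expR (- lam * (n - m)%:~R))).

Definition has_exp_dichotomy (B : int -> V -> V) : Prop :=
  exists Binv : int -> V -> V,
    (forall m, cancel (B m) (Binv m) /\ cancel (Binv m) (B m)) /\
    exp_dichotomy_with B Binv.

Definition seq_bounded (x : int -> V) : Prop :=
  exists M : R, forall n, `|x n| <= M.
Definition seq_sup_le (x : int -> V) (M : R) : Prop :=
  forall n, `|x n| <= M.

Definition id_minus_shift (B : int -> V -> V) (x : int -> V) : int -> V :=
  fun n => x n - B (n - 1) (x (n - 1)).

(* Id - BB is invertible on X_{l^infty} with ||(Id - BB)^{-1}|| <= K *)
Definition id_minus_shift_inv_le (B : int -> V -> V) (K : R) : Prop :=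
  (forall x1 x2, seq_bounded x1 -> seq_bounded x2 ->
     id_minus_shift B x1 = id_minus_shift B x2 -> x1 = x2) /\
  (forall z, seq_bounded z ->
     exists x, seq_bounded x /\ id_minus_shift B x = z) /\
  (forall x M, seq_bounded x -> seq_sup_le (id_minus_shift B x) M ->
     seq_sup_le x (K * M)).

(* the constant c of the context *)
Definition admissible_const (A : int -> V -> V) (c : R) : Prop :=
  exists K : R, 0 < K /\
    forall B : int -> {linear V -> V},
      (forall m, bounded_op (B m)) ->
      (forall m, opnorm_le (fun x => A m x - B m x) c) ->
      has_exp_dichotomy (fun m => B m) /\
      id_minus_shift_inv_le (fun m => B m) K.

End Defs.

From HB Require Import structures.
From mathcomp Require Import all_boot all_order all_algebra.
From mathcomp Require Import all_classical all_reals all_analysis.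
From mathcomp Require Import ring lra.
Set Implicit Arguments.
Unset Strict Implicit.
Unset Printing Implicit Defensive.
Import Order.TTheory GRing.Theory Num.Theory.
Import numFieldNormedType.Exports.
Local Open Scope ring_scope.

(* Seek the orbit as x = y + z.  Along y the maps F_n = A_n + f_n linearize to
   B_n = A_n + d_{y_n} f_n, which are c-close to A_n, so Id - BB is invertible on
   bounded sequences with an inverse of norm at most K, and x is an orbit iff
   (Id - BB) z = G z, where G z collects the defect y_{n+1} - F_n(y_n) and the
   first-order Taylor remainder of f_n at y_n.  By the mean value inequality and
   the Hölder bound on d f_n, G is (D eps^r)-Lipschitz on the eps-ball, so for
   L = 1/(2K) and eps^r <= 1/(2KD) the map z |-> (Id - BB)^-1 (G z) is a
   1/2-contraction of the eps-ball, whose iterates converge pointwise because X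
   is complete.  The solution is unique in the ball; since F and y are
   N-periodic, its shift by N is another solution, hence x is N-periodic. *)

Lemma subrACA (V : zmodType) (a b c d : V) : (a - b) - (c - d) = (a - c) - (b - d).
Proof. by rewrite !opprB addrACA [RHS]addrACA [- _ + _]addrC. Qed.

Section Geometric.
Variable R : realType.

Lemma ler_geometric_slack (a b C q : R) :
  `|q| < 1 -> (forall k, a <= b + C * q ^+ k) -> a <= b.
Proof.
move=> q1 H; apply/ler_addgt0Pr => e e0.
have [k _ Hk] := cvgr0_norm_lt _ (cvg_geometric C q1) e e0.
apply: le_trans (H k) _; rewrite lerD2l.
exact: le_trans (ler_norm _) (ltW (Hk k (leqnn k))).
Qed.

End Geometric.

Section GeometricCauchy.
Variables (R : realType) (V : completeNormedModType R).

Lemma cvg_geometric_increments (u : nat -> V) (C q : R) :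
  0 <= q < 1 -> (forall k, `|u k.+1 - u k| <= C * q ^+ k) ->
  exists l, forall k, `|u k - l| <= C / (1 - q) * q ^+ k.
Proof.
move=> /andP[q0 q1] Hu.
have C0 : 0 <= C by have := Hu 0%N; rewrite expr0 mulr1; apply: le_trans.
have q1' : `|q| < 1 by rewrite ger0_norm.
have q1n0 : 1 - q != 0 by rewrite subr_eq0 gt_eqF.
have tail k m : `|u k - u (k + m)%N| <= C / (1 - q) * (q ^+ k - q ^+ (k + m)).
  elim: m => [|m IH]; first by rewrite addn0 !subrr normr0 mulr0.
  rewrite addnS; apply: le_trans (ler_distD (u (k + m)%N) _ _) _.
  rewrite [X in _ + X <= _]distrC.
  apply: le_trans (lerD IH (Hu (k + m)%N)) _.
  by rewrite exprS le_eqVlt; apply/predU1P; left; field.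
have cu : cvgn u.
  have -> : u = (fun n => u 0%N) + series (telescope u).
    by apply/funext => n; rewrite /= telescopeK /= addrC subrK.
  apply: is_cvgD; first exact: is_cvg_cst.
  apply: normed_cvg; apply: (@series_le_cvg _ _ (geometric C q)).
  - by move=> n /=; exact: normr_ge0.
  - by move=> n; rewrite /= mulr_ge0 // exprn_ge0.
  - by move=> n; exact: Hu.
  - exact: is_cvg_geometric_series.
exists (limn u) => k.
have cn : (`|u k - u m| @[m --> \oo] --> `|u k - limn u|)%classic.
  by apply: cvg_norm; apply: cvgB => //; exact: cvg_cst.
rewrite -(cvg_lim _ cn) //; apply: limr_le; first exact: cvgP cn.
near=> m.
have km : (k <= m)%N by near: m; exact: nbhs_infty_ge.
rewrite -(subnKC km); apply: le_trans (tail _ _) _.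
apply: ler_wpM2l; first by rewrite divr_ge0 // subr_ge0 ltW.
by rewrite gerBl exprn_ge0.
Unshelve. all: by end_near.
Qed.

End GeometricCauchy.

Section MeanValue.
Variables (R : realType) (V W : normedModType R).

Lemma segment_local_lipschitz (phi : R -> W) (K : R) :
  (forall s, 0 <= s <= 1 -> exists2 eta, 0 < eta & forall u, 0 <= u <= 1 ->
     `|u - s| < eta -> `|phi u - phi s| <= K * `|u - s|) ->
  `|phi 1 - phi 0| <= K.
Proof.
move=> loc.
pose S := [set t : R | 0 <= t <= 1 /\ `|phi t - phi 0| <= K * t]%classic.
have S0 : S 0 by split; rewrite ?lexx ?ler01 // subrr normr0 mulr0.
have hs : has_sup S by split; [exists 0 | exists 1 => t [/andP[]]].
pose s := sup S.
have ub t : S t -> t <= s by move=> St; exact: sup_upper_bound.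
have s01 : 0 <= s <= 1 by rewrite ub //= ge_sup // => [|t [/andP[]]]; first by exists 0.
have [eta eta0 Heta] := loc s s01.
have Ss : `|phi s - phi 0| <= K * s.
  have [t St st] := sup_adherent eta0 hs.
  have ts : t <= s := ub t St.
  apply: le_trans (ler_distD (phi t) _ _) _.
  rewrite -[s in K * s](subrK t s) mulrDr lerD //; last exact: St.2.
  have ts_abs : `|t - s| = s - t by rewrite distrC ger0_norm // subr_ge0.
  rewrite distrC -ts_abs Heta // ?ts_abs; first exact: St.1.
  by rewrite ltrBlDr addrC -ltrBlDr.
have s1 : s = 1.
  apply/eqP; rewrite eq_le (andP s01).2 /= leNgt; apply/negP => slt1.
  pose u := Num.min (s + eta / 2) 1.
  have su : s < u by rewrite /u lt_min slt1 ltrDl divr_gt0.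
  have u01 : 0 <= u <= 1 by rewrite ge_min lexx orbT (le_trans (andP s01).1) ?ltW.
  have us : `|u - s| = u - s by rewrite ger0_norm // subr_ge0 ltW.
  have Su : S u.
    split=> //; apply: le_trans (ler_distD (phi s) _ _) _.
    rewrite -[u in K * u](subrK s) mulrDr lerD // -us Heta // us.
    have : u <= s + eta / 2 by rewrite ge_min lexx.
    move: eta0; lra.
  by have := lt_le_trans su (ub u Su); rewrite ltxx.
by move: Ss; rewrite s1 mulr1.
Qed.

Lemma differentiable_approx (g : V -> W) (x : V) (e : R) :
  differentiable g x -> 0 < e ->
  exists2 d : R, 0 < d &
    forall h, `|h| < d -> `|g (x + h) - g x - 'd g x h| <= e * `|h|.
Proof.
move=> /diff_locally /eqaddoP /(_ e) Ho e0.
have /nbhs_norm0P[d d0 Hd] := Ho e0; exists d => // h hd.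
have := Hd h hd; rewrite /= opprD addrA; congr (`|_ - _ - _| <= _).
by rewrite addrC.
Qed.

Lemma mean_value_ineq (g : V -> W) (L : {linear V -> W}) (p h : V) (M : R) :
  (forall t, 0 <= t <= 1 -> differentiable g (p + t *: h)) ->
  (forall t, 0 <= t <= 1 -> forall v, `|'d g (p + t *: h) v - L v| <= M * `|v|) ->
  `|g (p + h) - g p - L h| <= M * `|h|.
Proof.
move=> Hd HM; apply/ler_addgt0Pr => del del0.
pose phi t := g (p + t *: h) - t *: L h.
have -> : g (p + h) - g p - L h = phi 1 - phi 0.
  by rewrite /phi !scale1r !scale0r addr0 subr0 addrAC.
apply: segment_local_lipschitz => s s01.
have h1 : 0 < `|h| + 1 by rewrite ltr_wpDl.
have [d d0 Hdd] := differentiable_approx (Hd s s01) (divr_gt0 del0 h1).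
exists (d / (`|h| + 1)); first exact: divr_gt0.
move=> u _ us; set k := (u - s) *: h.
have -> : phi u - phi s = g (p + s *: h + k) - g (p + s *: h) - 'd g (p + s *: h) k
                          + ('d g (p + s *: h) k - L k).
  rewrite /phi; have -> : p + u *: h = p + s *: h + k.
    by rewrite -addrA -scalerDl [s + _]addrC subrK.
  by rewrite addrA subrK /k [L (_ *: h)]linearZ /= [(u - s) *: L h]scalerBl subrACA.
have nk : `|k| = `|u - s| * `|h| by rewrite normrZ.
have kd : `|k| < d.
  rewrite nk (@le_lt_trans _ _ (`|u - s| * (`|h| + 1))) //.
    by rewrite ler_wpM2l // lerDl.
  by rewrite -ltr_pdivlMr.
apply: le_trans (ler_normD _ _) _; apply: le_trans (lerD (Hdd _ kd) (HM s s01 k)) _.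
have small : del / (`|h| + 1) * `|h| <= del.
  by rewrite mulrAC ler_pdivrMr // ler_wpM2l ?ltW // ltrDl.
rewrite nk; have := normr_ge0 (u - s); nra.
Qed.

Lemma holder_diff_remainder (g : V -> W) (D r eps : R) (p a b : V) :
  (forall x, differentiable g x) -> 0 <= D -> 0 <= r ->
  (forall x x' v, `|'d g x v - 'd g x' v| <= D * `|x - x'| `^ r * `|v|) ->
  `|a| <= eps -> `|b| <= eps ->
  `|g (p + a) - g (p + b) - 'd g p (a - b)| <= D * eps `^ r * `|a - b|.
Proof.
move=> Hg D0 r0 Hhol ha hb.
have eps0 : 0 <= eps := le_trans (normr_ge0 a) ha.
have -> : p + a = p + b + (a - b) by rewrite -addrA [b + _]addrC subrK.
apply: mean_value_ineq => [t _|t /andP[t0 t1] v]; first exact: Hg.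
apply: le_trans (Hhol _ _ v) _; rewrite ler_wpM2r // ler_wpM2l //.
apply: ge0_ler_powR; rewrite ?nnegrE //.
have -> : p + b + t *: (a - b) - p = (1 - t) *: b + t *: a.
  by rewrite addrAC [p + b]addrC addrK scalerBr scalerBl scale1r addrA addrAC.
apply: le_trans (ler_normD _ _) _; rewrite !normrZ !ger0_norm ?subr_ge0 //.
nra.
Qed.

End MeanValue.

Section SupNorm.
Variables (R : realType) (V : normedModType R).
Implicit Types (z w : int -> V) (d q : R).

Lemma seq_sup_leB z w d1 d2 :
  seq_sup_le z d1 -> seq_sup_le w d2 -> seq_sup_le (z - w) (d1 + d2).
Proof. by move=> hz hw n; apply: le_trans (ler_normB _ _) (lerD (hz n) (hw n)). Qed.

Lemma seq_sup_le_contraction_eq0 z d q : `|q| < 1 -> seq_sup_le z d ->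
  (forall d', seq_sup_le z d' -> seq_sup_le z (q * d')) -> z = 0.
Proof.
move=> q1 hz contr; have hk k : seq_sup_le z (d * q ^+ k).
  by elim: k => [|k IH]; rewrite ?expr0 ?mulr1 // exprS mulrCA; exact: contr.
apply/funext => n; apply/eqP; rewrite -normr_le0.
by apply: (ler_geometric_slack q1) => k; rewrite add0r; exact: hk.
Qed.

End SupNorm.

Section SupContraction.
Variables (R : realType) (V : completeNormedModType R).

Lemma seq_contraction_fixed_point (Phi : (int -> V) -> int -> V) (q eps : R) :
  0 <= q < 1 -> 0 <= eps ->
  (forall z, seq_sup_le z eps -> seq_sup_le (Phi z) eps) ->
  (forall z1 z2 d, seq_sup_le z1 eps -> seq_sup_le z2 eps ->
     seq_sup_le (z1 - z2) d -> seq_sup_le (Phi z1 - Phi z2) (q * d)) ->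
  exists2 z, seq_sup_le z eps & Phi z = z.
Proof.
move=> /andP[q0 q1] eps0 Phi_ball Phi_contr.
have q1' : `|q| < 1 by rewrite ger0_norm.
pose zs k := iter k Phi 0.
have zs_ball k : seq_sup_le (zs k) eps.
  by elim: k => [n|k IH]; [rewrite normr0 | exact: Phi_ball].
have zs_step k : seq_sup_le (zs k.+1 - zs k) (eps * q ^+ k).
  elim: k => [|k IH]; first by rewrite expr0 mulr1 /zs /= subr0; apply: Phi_ball (zs_ball 0%N).
  by rewrite exprS mulrCA; apply: Phi_contr (zs_ball _) (zs_ball _) IH.
pose C := eps / (1 - q).
have /choice[z zs_z] : forall n, exists l, forall k, `|zs k n - l| <= C * q ^+ k.
  by move=> n; apply: cvg_geometric_increments => [|k]; [rewrite q0 | exact: zs_step].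
have z_ball : seq_sup_le z eps.
  move=> n; apply: (ler_geometric_slack q1') => k.
  have -> : z n = zs k n - (zs k n - z n) by rewrite opprB addrC subrK.
  exact: le_trans (ler_normB _ _) (lerD (zs_ball k n) (zs_z n k)).
exists z => //; apply/funext => n; apply/eqP; rewrite -subr_eq0 -normr_le0.
apply: (ler_geometric_slack q1' (C := 2 * C * q)) => k; rewrite add0r.
have -> : Phi z n - z n = (Phi z - Phi (zs k)) n + (zs k.+1 n - z n) by rewrite addrA subrK.
have z_zs : seq_sup_le (z - zs k) (C * q ^+ k) by move=> m; rewrite distrC zs_z.
have -> : 2 * C * q * q ^+ k = q * (C * q ^+ k) + C * q ^+ k.+1 by rewrite exprS; ring.
exact: le_trans (ler_normD _ _) (lerD (Phi_contr _ _ _ z_ball (zs_ball k) z_zs n) (zs_z n _)).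
Qed.

End SupContraction.

Section IdMinusShiftEquation.
Variables (R : realType) (V : completeNormedModType R).
Variables (B : int -> {linear V -> V}) (K q eps Lip : R).
Variable G : (int -> V) -> int -> V.
Local Notation ims := (id_minus_shift (fun m => B m)).

Lemma id_minus_shiftB (x1 x2 : int -> V) : ims (x1 - x2) = ims x1 - ims x2.
Proof.
by apply/funext => n; rewrite /id_minus_shift /= linearB /= subrACA.
Qed.

Hypotheses (B_inv : id_minus_shift_inv_le (fun m => B m) K)
  (q01 : 0 <= q < 1) (KLip : K * Lip <= q)
  (G_lip : forall z1 z2 d, seq_sup_le z1 eps -> seq_sup_le z2 eps ->
     seq_sup_le (z1 - z2) d -> seq_sup_le (G z1 - G z2) (Lip * d)).

Lemma id_minus_shift_eq_contraction x z1 z2 d :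
  seq_bounded x -> seq_sup_le z1 eps -> seq_sup_le z2 eps ->
  seq_sup_le (z1 - z2) d -> ims x = G z1 - G z2 -> seq_sup_le x (q * d).
Proof.
move=> xb hz1 hz2 hd ex n; have d0 : 0 <= d := le_trans (normr_ge0 _) (hd 0).
have [_ [_ ims_inv]] := B_inv; apply: le_trans (ims_inv x _ xb _ n) _.
  by rewrite ex; exact: G_lip.
by rewrite mulrA ler_wpM2r.
Qed.

Lemma id_minus_shift_eq_unique z w : seq_sup_le z eps -> seq_sup_le w eps ->
  ims z = G z -> ims w = G w -> z = w.
Proof.
move=> hz hw ez ew; apply/subr0_eq.
have q1 : `|q| < 1 by case/andP: q01 => q0 q1; rewrite ger0_norm.
apply: (seq_sup_le_contraction_eq0 q1 (seq_sup_leB hz hw)) => d hd.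
apply: (id_minus_shift_eq_contraction _ hz hw hd); last by rewrite id_minus_shiftB ez ew.
by exists (eps + eps); exact: seq_sup_leB.
Qed.

Lemma id_minus_shift_eq_solvable M : 0 <= eps -> K * M <= eps ->
  (forall z, seq_sup_le z eps -> seq_sup_le (G z) M) ->
  exists2 z, seq_sup_le z eps & ims z = G z.
Proof.
move=> eps0 KM G_ball; have [_ [ims_surj ims_inv]] := B_inv.
have /choice[S HS] : forall z, exists x,
    seq_sup_le z eps -> seq_bounded x /\ ims x = G z.
  move=> z; case: (pselect (seq_sup_le z eps)) => hz; last by exists 0.
  have [x [xb xe]] := ims_surj (G z) (ex_intro _ M (G_ball z hz)).
  by exists x.
have S_ball z : seq_sup_le z eps -> seq_sup_le (S z) eps.
  move=> hz n; have [Sb SG] := HS z hz; apply: le_trans KM.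
  by apply: ims_inv Sb _ n; rewrite SG; exact: G_ball.
have [z hz Sz] : exists2 z, seq_sup_le z eps & S z = z.
  apply: (seq_contraction_fixed_point q01 eps0 S_ball) => z1 z2 d hz1 hz2 hd.
  have [[M1 b1] e1] := HS z1 hz1; have [[M2 b2] e2] := HS z2 hz2.
  apply: (id_minus_shift_eq_contraction _ hz1 hz2 hd).
    by exists (M1 + M2); exact: seq_sup_leB.
  by rewrite id_minus_shiftB e1 e2.
by exists z => //; rewrite -{1}Sz; exact: (HS z hz).2.
Qed.

End IdMinusShiftEquation.

Section Shadowing.
Variables (R : realType) (V : normedModType R).
Variables (A : int -> {linear V -> V}) (f : int -> V -> V) (y : int -> V).

Definition linearization (m : int) : {linear V -> V} := A m \+ 'd (f m) (y m).

Definition shadowing_rhs (z : int -> V) (n : int) : V :=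
  let m := n - 1 in
  A m (y m + z m) + f m (y m + z m) - y n - linearization m (z m).

Local Notation ims := (id_minus_shift (fun m => linearization m)).

Lemma linearization_bounded m c :
  bounded_op (A m) -> opnorm_le ('d (f m) (y m)) c -> bounded_op (linearization m).
Proof.
move=> [M HM] Hc; exists (M + c) => v; rewrite mulrDl.
exact: le_trans (ler_normD _ _) (lerD (HM v) (Hc v)).
Qed.

Lemma linearization_close m c :
  opnorm_le ('d (f m) (y m)) c -> opnorm_le (fun x => A m x - linearization m x) c.
Proof. by move=> Hc v; rewrite /= opprD addrA subrr add0r normrN. Qed.

Lemma shadowing_rhs_orbit z n : ims z (n + 1) = shadowing_rhs z (n + 1) <->
  y (n + 1) + z (n + 1) = A n (y n + z n) + f n (y n + z n).
Proof.
rewrite /id_minus_shift /shadowing_rhs /= addrK.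
split=> [/addIr ->|<-]; first by rewrite addrC subrK.
by rewrite [y _ + _]addrC addrK.
Qed.

Lemma shadowing_rhsB z1 z2 n : (shadowing_rhs z1 - shadowing_rhs z2) n =
  f (n - 1) (y (n - 1) + z1 (n - 1)) - f (n - 1) (y (n - 1) + z2 (n - 1))
  - 'd (f (n - 1)) (y (n - 1)) (z1 (n - 1) - z2 (n - 1)).
Proof.
have split_rhs z : shadowing_rhs z n = A (n - 1) (y (n - 1)) - y n +
    (f (n - 1) (y (n - 1) + z (n - 1)) - 'd (f (n - 1)) (y (n - 1)) (z (n - 1))).
  rewrite /shadowing_rhs /= linearD opprD !addrA; congr (_ - _).
  set a := A _ (y _); set b := A _ (z _).
  by rewrite addrAC (addrAC (a + b)) addrK addrAC.
transitivity (shadowing_rhs z1 n - shadowing_rhs z2 n) => //.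
by rewrite !split_rhs [A _ _ - _ + (f _ (_ + z1 _) - _)]addrC addrKA [in RHS]linearB subrACA.
Qed.

Lemma shadowing_rhs0 n :
  shadowing_rhs 0 n = A (n - 1) (y (n - 1)) + f (n - 1) (y (n - 1)) - y n.
Proof. by rewrite /shadowing_rhs /= -[0 (n - 1)]/(0 : V) !linear0 !addr0 subr0. Qed.

Lemma shadowing_rhs_shift (N : int) z :
  (forall n x, A (n + N) x + f (n + N) x = A n x + f n x) ->
  (forall n, y (n + N) = y n) ->
  ims z = shadowing_rhs z -> ims (fun n => z (n + N)) = shadowing_rhs (fun n => z (n + N)).
Proof.
move=> F_per y_per ez; apply/funext => n; rewrite -(subrK 1 n); set m := n - 1.
apply/shadowing_rhs_orbit; rewrite -(y_per (m + 1)) -(y_per m) -F_per addrAC.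
by apply/shadowing_rhs_orbit; rewrite ez.
Qed.

Variables (D r eps : R).
Hypotheses (f_diff : forall n x, differentiable (f n) x) (D0 : 0 <= D) (r0 : 0 <= r)
  (f_holder : forall n x x', opnorm_le (fun v => 'd (f n) x v - 'd (f n) x' v)
                                      (D * `|x - x'| `^ r)).

Lemma shadowing_rhs_lipschitz z1 z2 d : seq_sup_le z1 eps -> seq_sup_le z2 eps ->
  seq_sup_le (z1 - z2) d ->
  seq_sup_le (shadowing_rhs z1 - shadowing_rhs z2) (D * eps `^ r * d).
Proof.
move=> hz1 hz2 hd n; rewrite shadowing_rhsB.
apply: le_trans (holder_diff_remainder _ (f_diff _) D0 r0 (f_holder _) (hz1 _) (hz2 _)) _.
by rewrite ler_wpM2l ?mulr_ge0 ?powR_ge0 //; exact: hd.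
Qed.

Lemma shadowing_rhs_ball delta :
  (forall n, `|y (n + 1) - (A n (y n) + f n (y n))| <= delta) ->
  forall z, seq_sup_le z eps -> seq_sup_le (shadowing_rhs z) (delta + D * eps `^ r * eps).
Proof.
move=> y_delta z hz n; rewrite -[shadowing_rhs z n](subrK (shadowing_rhs 0 n)) addrC.
apply: le_trans (ler_normD _ _) (lerD _ _).
  by rewrite shadowing_rhs0 distrC -{1}(subrK 1 n); exact: y_delta.
apply: (shadowing_rhs_lipschitz hz) => // [m|m]; rewrite ?subr0 // normr0.
exact: le_trans (normr_ge0 _) (hz 0).
Qed.

End Shadowing.

Lemma holder_const_le_half (R : realType) (K D r eps : R) :
  0 < K -> 0 < D -> 0 < r -> 0 < eps -> eps <= (2 * K * D)^-1 `^ r^-1 ->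
  K * (D * eps `^ r) <= 2^-1.
Proof.
move=> K0 D0 r0 eps0 eps_small.
have KD0 : 0 < (2 * K * D)^-1 by rewrite invr_gt0 !mulr_gt0.
have eps_r : eps `^ r <= (2 * K * D)^-1.
  have -> : (2 * K * D)^-1 = ((2 * K * D)^-1 `^ r^-1) `^ r.
    by rewrite -powRrM mulVf ?lt0r_neq0 // powRr1 // ltW.
  by apply: ge0_ler_powR; rewrite ?nnegrE ?powR_ge0 // ltW.
have -> : 2^-1 = K * (D * (2 * K * D)^-1) by field; rewrite !gt_eqF.
by rewrite !ler_pM2l.
Qed.

Theorem corollary3p6 (R : realType) (V : completeNormedModType R)
  (A : int -> {linear V -> V}) (Ainv : int -> V -> V) (c : R)
  (f : int -> V -> V) (D r : R) (N : nat) :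
  (forall m, bounded_op (A m)) ->
  (forall m, cancel (A m) (Ainv m) /\ cancel (Ainv m) (A m)) ->
  (exists M : R, forall m, opnorm_le (A m) M) ->
  exp_dichotomy_with (fun m => A m) Ainv ->
  0 < c -> admissible_const (fun m => A m) c ->
  (forall n x, differentiable (f n) x) ->
  (forall n x, opnorm_le ('d (f n) x) c) ->
  (exists M : R, forall n x, `|f n x| <= M) ->
  0 < D -> 0 < r ->
  (forall n x y, opnorm_le (fun v => 'd (f n) x v - 'd (f n) y v)
                           (D * `|x - y| `^ r)) ->
  (0 < N)%N ->
  (forall n x, A (n + N%:Z) x + f (n + N%:Z) x = A n x + f n x) ->
  exists L : R, 0 < L /\
    exists eps0 : R, 0 < eps0 /\
      forall eps : R, 0 < eps -> eps <= eps0 ->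
        forall y : int -> V,
          (forall n, `|y (n + 1) - (A n (y n) + f n (y n))| <= L * eps) ->
          (forall n, y (n + N%:Z) = y n) ->
          exists x : int -> V,
            [/\ (forall n, x (n + 1) = A n (x n) + f n (x n)),
                (forall n, `|x n - y n| <= eps) &
                (forall n, x (n + N%:Z) = x n)].
Proof.
move=> A_bd _ _ _ c0 [K [K0 adm]] f_diff df_c _ D0 r0 f_holder _ F_per.
exists (2 * K)^-1; split; first by rewrite invr_gt0 mulr_gt0.
exists ((2 * K * D)^-1 `^ r^-1); split; first by rewrite powR_gt0 // invr_gt0 !mulr_gt0.
move=> eps eps0 eps_small y y_pseudo y_per.
pose B := linearization A f y.
have [_ B_inv] := adm B (fun m => linearization_bounded (A_bd m) (df_c m (y m)))
                        (fun m => linearization_close A (df_c m (y m))).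
have KLip := holder_const_le_half K0 D0 r0 eps0 eps_small.
have q01 : 0 <= (2^-1 : R) < 1 by rewrite invr_ge0 invf_lt1 ?ler0n ?ltr1n.
have G_lip := shadowing_rhs_lipschitz A y (eps := eps) f_diff (ltW D0) (ltW r0) f_holder.
have KM : K * ((2 * K)^-1 * eps + D * eps `^ r * eps) <= eps.
  have -> : K * ((2 * K)^-1 * eps + D * eps `^ r * eps) =
            2^-1 * eps + K * (D * eps `^ r) * eps by field; rewrite gt_eqF.
  by move: KLip; nra.
have [z z_ball z_eq] := id_minus_shift_eq_solvable B_inv q01 KLip G_lip (ltW eps0) KM
  (shadowing_rhs_ball f_diff (ltW D0) (ltW r0) f_holder y_pseudo).
have z_per := id_minus_shift_eq_unique B_inv q01 KLip G_lip z_ball (fun n => z_ball _) z_eq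
  (shadowing_rhs_shift F_per y_per z_eq).
exists (y + z); split => n.
- by apply/(shadowing_rhs_orbit A f y z); rewrite z_eq.
- by rewrite fctE addrAC subrr add0r; exact: z_ball.
- by rewrite !fctE y_per [in RHS]z_per.
Qed.
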